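(* Let $F$ be the uniform distribution on $[0,1]$, $d\ge2$, and let $G$ be a $d$-regular bipartite graph with $n/2$ vertices $L$ on one side and $n/2$ vertices $R$ on the other. Then: (i) the vector with $T_i=1/2$ for $i\in L$ and $T_i=2^{d-1}$ for $i\in R$ lies in $\mathcal{N}_{(1/2)\cdot\mathbf{1}}$ and has revenue $n/8$; (ii) for every uniform price $p'>0$, $\inf_{\mathbf{T}\in\mathcal{N}_{p'\cdot\mathbf{1}}}\mathcal{R}(p'\cdot\mathbf{1},\mathbf{T})\le n/d$; hence the ratio between the best equilibrium revenue and the best worst-case uniform-price revenue can be at least $d/8$; (iii) for the non-uniform price vector with $p_i=1/2$ for $i\in L$ and $p_i=1$ for $i\in R$, the equilibrium set consists of a single equilibrium (up to thresholds above $1$ for buyers in $R$, which never buy), with revenue $n/8$.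
   Context: Public-goods pricing game: $n$ buyers are the vertices of an undirected graph $G=([n],E)$; $N(i)=\{j:(i,j)\in E\}$ (so $i\notin N(i)$). Values i.i.d. with cumulative distribution function $F$; for the uniform distribution $F(x)=\min\{1,x\}$ for $x\ge0$, $F(\infty)=1$. An equilibrium for price vector $\mathbf{p}$ is $\mathbf{T}\in[0,\infty]^n$ (buyer $i$ purchases iff $v_i\ge T_i$) with $T_i=p_i/\prod_{j\in N(i)}F(T_j)$ for all $i$; $\mathcal{N}_{\mathbf{p}}$ is the set of equilibria; $\mathcal{R}(\mathbf{p},\mathbf{T})=\sum_ip_i(1-F(T_i))$; $p\cdot\mathbf{1}$ is the uniform price vector. *)

From HB Require Import structures.
From mathcomp Require Import all_boot all_order all_algebra.
Set Implicit Arguments. Unset Strict Implicit. Unset Printing Implicit Defensive.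
Import Order.TTheory GRing.Theory Num.Theory.
Local Open Scope ring_scope.

(* Thresholds live in [0, oo]: [Some x] is the finite threshold x, [None] is oo. *)
Definition ext (R : rcfType) := option R.

Definition Funif (R : rcfType) (x : option R) : R :=
  if x is Some y then Num.max 0 (Num.min 1 y) else 1.

(* Division in [0, oo]: a / 0 = oo (only used with a > 0). *)
Definition ediv (R : rcfType) (a b : R) : option R :=
  if b == 0 then None else Some (a / b).

Definition is_equilibrium (R : rcfType) (n : nat) (e : rel 'I_n)
    (p : 'I_n -> R) (T : 'I_n -> option R) : Prop :=
  (forall i, if T i is Some x then 0 <= x else true) /\
  (forall i, T i = ediv (p i) (\prod_(j | e i j) Funif (T j))).

Definition revenue (R : rcfType) (n : nat) (p : 'I_n -> R) (T : 'I_n -> option R) : R :=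
  \sum_i p i * (1 - Funif (T i)).

From HB Require Import structures.
From mathcomp Require Import all_boot all_order all_algebra.
From mathcomp Require Import ring lra.
Import Order.TTheory GRing.Theory Num.Theory.
Local Open Scope ring_scope.

(* For a uniform price p on a d-regular graph, the
   constant threshold t with t^(d+1) = p (or t = p when p >= 1) is an
   equilibrium, and the Bernoulli bound shows its revenue is at most n/d;
   this gives part (ii).
   For "split" prices (a on L, b on ~: L) on a bipartite graph, thresholds a on
   L and any c >= 1 with b = c a^d on ~: L form an equilibrium, which yields
   part (i) (a = b = 1/2, c = 2^(d-1)) and the existence half of (iii)
   (a = 1/2, b = 1, c = 2^d).  When b >= 1, every equilibrium makes the buyers
   of ~: L abstain, hence forces threshold a on L: the uniqueness half of (iii).
   In all these cases the revenue is |L| a (1-a) = n/8 for a = 1/2. *)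

Section UniformCDF.
Context {R : rcfType}.

Lemma Funif_id (t : R) : 0 <= t <= 1 -> Funif (Some t) = t.
Proof. by case/andP=> t0 t1; rewrite /Funif (min_r t1) (max_r t0). Qed.

Lemma Funif_ge1 (t : R) : 1 <= t -> Funif (Some t) = 1.
Proof. by move=> t1; rewrite /Funif (min_l t1) max_r. Qed.

Lemma Funif_range (x : option R) : 0 <= Funif x <= 1.
Proof.
case: x => [y|] /=; last by rewrite ler01 lexx.
by rewrite le_max lexx /= ge_max ler01 /= ge_min lexx.
Qed.

(* Bernoulli-type inequality: k t^k (1-t) <= 1 - t^k = (1-t)(1 + ... + t^(k-1)). *)
Lemma bernoulli_pow (t : R) (k : nat) :
  0 <= t <= 1 -> k%:R * t ^+ k * (1 - t) <= 1 - t ^+ k.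
Proof.
case/andP=> t0 t1; elim: k => [|k IH]; first by rewrite !mul0r expr0 subrr.
have tk0 : 0 <= t ^+ k by rewrite exprn_ge0.
have tk1 : t ^+ k <= 1 by rewrite exprn_ile1.
rewrite !exprS -natr1.
move: IH tk0 tk1; set u := t ^+ k; set K : R := k%:R => IH tk0 tk1.
have step : t * (K * u * (1 - t)) <= t * (1 - u) by rewrite ler_wpM2l.
have slack : 0 <= (1 - t) * (1 - t * u).
  by apply: mulr_ge0; rewrite subr_ge0 // mulr_ile1.
nra.
Qed.

Lemma pow_revenue_le1 (t : R) (k : nat) :
  0 <= t <= 1 -> k%:R * (t ^+ k.+1 * (1 - t)) <= 1.
Proof.
move=> t01; have := bernoulli_pow t k t01; case/andP: t01 => t0 t1.
have tk0 : 0 <= t ^+ k by rewrite exprn_ge0.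
rewrite exprSr; nra.
Qed.

Lemma pow_root_exists (p : R) (k : nat) :
  0 < p <= 1 -> exists2 t, 0 < t <= 1 & t ^+ k.+1 = p.
Proof.
case/andP=> p0 p1.
have [t /andP[t0 t1] /rootP] : exists2 t, (0 : R) <= t <= 1 & root ('X^(k.+1) - p%:P) t.
  apply: poly_ivt; first exact: ler01.
  by rewrite !hornerE expr0n /= expr1n sub0r oppr_le0 subr_ge0 ltW.
rewrite !hornerE => /eqP; rewrite subr_eq0 => /eqP tp.
exists t => //; rewrite t1 andbT lt0r t0 andbT.
by apply: contraTneq p0 => t00; rewrite -tp t00 expr0n ltxx.
Qed.

(* 2^k (1/2)^k = 1: the identity behind the thresholds 2^(d-1) and 2^d. *)
Lemma two_pow_half (k : nat) : (2 : R) ^+ k * (1 / 2) ^+ k = 1.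
Proof. by rewrite -exprMn mul1r divff ?pnatr_eq0 ?expr1n. Qed.

End UniformCDF.

Section Revenue.
Context {R : rcfType} {n : nat}.

Lemma revenue_const (p t : R) :
  revenue (fun _ : 'I_n => p) (fun _ => Some t) = n%:R * (p * (1 - Funif (Some t))).
Proof. by rewrite /revenue sumr_const card_ord mulr_natl. Qed.

Lemma revenue_split {L : {set 'I_n}} {p : 'I_n -> R} {T : 'I_n -> option R} (c : R) :
  (forall i, i \in L -> p i * (1 - Funif (T i)) = c) ->
  (forall i, i \notin L -> Funif (T i) = 1) ->
  revenue p T = #|L|%:R * c.
Proof.
move=> inL outL; rewrite /revenue (bigID (mem L)) /=.
rewrite [X in _ + X]big1 ?addr0 => [|i /outL ->]; last by rewrite subrr mulr0.
by rewrite (eq_bigr (fun _ => c)) // sumr_const mulr_natl.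
Qed.

Lemma card_balanced {L : {set 'I_n}} : #|L| = #|~: L| -> (#|L|%:R : R) = n%:R / 2.
Proof.
move=> bal; have -> : (n%:R : R) = #|L|%:R + #|L|%:R.
  by rewrite -natrD {2}bal cardsC card_ord.
by field.
Qed.

Lemma split_revenue {L : {set 'I_n}} {p : 'I_n -> R}
    {T : 'I_n -> option R} {a : R} :
  #|L| = #|~: L| -> 0 <= a <= 1 ->
  (forall i, i \in L -> p i = a /\ T i = Some a) ->
  (forall i, i \notin L -> Funif (T i) = 1) ->
  revenue p T = n%:R / 2 * (a * (1 - a)).
Proof.
move=> bal a01 inL outL; rewrite (revenue_split (L := L) (a * (1 - a))) ?card_balanced //.
by move=> i /inL [-> ->]; rewrite Funif_id.
Qed.

End Revenue.

Section RegularGraph.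
Context {R : rcfType} {n d : nat} {e : rel 'I_n}.
Hypothesis regular : forall i, #|[set j | e i j]| = d.

Lemma prod_neighbours_const (i : 'I_n) (c : R) : \prod_(j | e i j) c = c ^+ d.
Proof. by rewrite -(regular i) -prodr_const; apply: eq_bigl => j; rewrite inE. Qed.

(* A price p >= 1 is met with threshold p by everybody: all neighbours abstain. *)
Lemma equilibrium_const_high (p : R) :
  1 <= p -> is_equilibrium e (fun _ => p) (fun _ => Some p).
Proof.
move=> p1; split=> i; first exact: le_trans p1.
by rewrite big1 ?/ediv ?oner_eq0 ?divr1 // => j _; rewrite Funif_ge1.
Qed.

Lemma equilibrium_const_root (p t : R) :
  0 < t <= 1 -> t ^+ d.+1 = p -> is_equilibrium e (fun _ => p) (fun _ => Some t).
Proof.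
case/andP=> t0 t1 tp; split=> i; first exact: ltW.
have td0 : t ^+ d != 0 by rewrite expf_neq0 // gt_eqF.
rewrite (eq_bigr (fun _ => t)) => [|j _]; last by rewrite Funif_id // ltW.
by rewrite prod_neighbours_const /ediv (negbTE td0) -tp exprS mulfK.
Qed.

Lemma uniform_price_low_revenue {p : R} :
  (0 < d)%N -> 0 < p ->
  exists T, is_equilibrium e (fun _ => p) T /\ revenue (fun _ => p) T <= n%:R / d%:R.
Proof.
move=> d0 p0; have [p1|p1] := leP 1 p.
  exists (fun _ => Some p); split; first exact: equilibrium_const_high.
  by rewrite revenue_const Funif_ge1 // subrr !mulr0 divr_ge0.
have [t t01 tp] : exists2 t, 0 < t <= 1 & t ^+ d.+1 = p.
  by apply: pow_root_exists; rewrite p0 ltW.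
exists (fun _ => Some t); split; first exact: equilibrium_const_root.
have t01' : 0 <= t <= 1 by case/andP: t01 => t0 ->; rewrite ltW.
rewrite revenue_const Funif_id // -tp.
have d_pos : (0 : R) < d%:R by rewrite ltr0n.
have share_le : t ^+ d.+1 * (1 - t) <= d%:R^-1.
  by rewrite -(ler_pM2l d_pos) mulfV ?gt_eqF ?pow_revenue_le1.
exact: ler_wpM2l.
Qed.

End RegularGraph.

Section BipartiteGraph.
Context {R : rcfType} {n d : nat} {e : rel 'I_n} {L : {set 'I_n}}.
Hypothesis bipartite : forall i j, e i j -> (i \in L) = (j \notin L).
Hypothesis regular : forall i, #|[set j | e i j]| = d.

Definition split_thresholds (a c : R) (i : 'I_n) : option R :=
  if i \in L then Some a else Some c.

Lemma neighbour_of_L {i j : 'I_n} : i \in L -> e i j -> j \notin L.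
Proof. by move=> iL /bipartite; rewrite iL. Qed.

Lemma neighbour_of_coL {i j : 'I_n} : i \notin L -> e i j -> j \in L.
Proof. by move=> iL /bipartite; rewrite (negbTE iL) => /esym /negbFE. Qed.

Lemma threshold_isolated (p : 'I_n -> R) (T : 'I_n -> option R) (i : 'I_n) :
  (forall j, e i j -> Funif (T j) = 1) ->
  ediv (p i) (\prod_(j | e i j) Funif (T j)) = Some (p i).
Proof. by move=> abstain; rewrite big1 ?/ediv ?oner_eq0 ?divr1. Qed.

Lemma split_equilibrium {p : 'I_n -> R} {a c : R} :
  0 < a <= 1 -> 1 <= c ->
  (forall i, i \in L -> p i = a) -> (forall i, i \notin L -> p i = c * a ^+ d) ->
  is_equilibrium e p (split_thresholds a c).
Proof.
move=> /andP[a0 a1] c1 pL pcoL; split=> i.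
  by rewrite /split_thresholds; case: (i \in L); [exact: ltW | exact: le_trans c1].
rewrite /split_thresholds; case: ifP => iL.
  rewrite -(pL _ iL) threshold_isolated // => j /(neighbour_of_L iL) /negbTE.
  by rewrite /split_thresholds => ->; rewrite Funif_ge1.
rewrite (eq_bigr (fun _ => a)) => [|j /(neighbour_of_coL (negbT iL))]; last first.
  by rewrite /split_thresholds => ->; rewrite Funif_id // ltW.
have ad0 : a ^+ d != 0 by rewrite expf_neq0 // gt_eqF.
by rewrite (prod_neighbours_const regular) /ediv (negbTE ad0) pcoL ?iL // mulfK.
Qed.

Lemma split_equilibrium_unique {p : 'I_n -> R} {T : 'I_n -> option R} :
  (forall i, i \notin L -> 1 <= p i) -> is_equilibrium e p T ->
  (forall i, i \in L -> T i = Some (p i)) /\ (forall i, i \notin L -> Funif (T i) = 1).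
Proof.
move=> p1 [_ eqT].
have abstain i : i \notin L -> Funif (T i) = 1.
  move=> iL; have pi1 := p1 i iL; rewrite eqT /ediv.
  set P := \prod_(j | e i j) _.
  have P0 : 0 <= P by apply: prodr_ge0 => j _; case/andP: (Funif_range (T j)).
  have P1 : P <= 1 by apply: prodr_ile1 => j _; exact: Funif_range.
  case: eqP => // /eqP Pn0; apply: Funif_ge1.
  by rewrite (le_trans pi1) // ler_peMr ?(le_trans ler01 pi1) // invf_ge1 // lt0r Pn0.
split=> // i iL; rewrite eqT threshold_isolated //.
by move=> j /(neighbour_of_L iL); exact: abstain.
Qed.

End BipartiteGraph.

Theorem mainTheorem11 (R : rcfType) (n d : nat) (e : rel 'I_n) (L : {set 'I_n}) :
  (2 <= d)%N ->
  symmetric e -> irreflexive e ->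
  (forall i j, e i j -> (i \in L) = (j \notin L)) ->
  (forall i, #|[set j | e i j]| = d) ->
  #|L| = #|~: L| ->
  (* (i) *)
  (let T1 := fun i : 'I_n => if i \in L then Some (1 / 2 : R) else Some (2 ^+ d.-1 : R) in
   is_equilibrium e (fun _ => 1 / 2) T1 /\
   revenue (fun _ => 1 / 2) T1 = n%:R / 8)
  /\
  (* (ii): inf over equilibria of the revenue is <= n/d *)
  (forall p' : R, 0 < p' -> forall eps : R, 0 < eps ->
     exists T, is_equilibrium e (fun _ => p') T /\
               revenue (fun _ => p') T <= n%:R / d%:R + eps)
  /\
  (* (iii) *)
  (let p := fun i : 'I_n => if i \in L then (1 / 2 : R) else 1 in
   (exists T, is_equilibrium e p T) /\
   (forall T, is_equilibrium e p T ->
      (forall i, i \in L -> T i = Some (1 / 2)) /\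
      (forall i, i \notin L -> Funif (T i) = 1) /\
      revenue p T = n%:R / 8)).
Proof.
move=> d2 _ _ bipartite regular balanced.
have half01 : 0 < (1 / 2 : R) <= 1 by rewrite divr_gt0 ?ler_pdivrMr ?mul1r ?ler1n.
have pow2_ge1 k : (1 : R) <= 2 ^+ k by rewrite exprn_ege1 // ler1n.
have half_revenue (p : 'I_n -> R) (T : 'I_n -> option R) :
    (forall i, i \in L -> p i = 1 / 2 /\ T i = Some (1 / 2)) ->
    (forall i, i \notin L -> Funif (T i) = 1) -> revenue p T = n%:R / 8.
  move=> inL outL; rewrite (split_revenue balanced _ inL outL); first by field.
  by case/andP: half01 => /ltW ->.
split; [|split].
- move=> T1; split.
    apply: (split_equilibrium bipartite regular half01 (pow2_ge1 d.-1)) => // i _.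
    by rewrite -{2}(prednK (ltnW d2)) exprS mulrCA two_pow_half mulr1.
  apply: (half_revenue (fun _ => 1 / 2) T1) => i; rewrite /T1; first by move=> ->.
  by move=> /negbTE ->; apply: Funif_ge1.
- move=> p' p0 eps eps0.
  have [T [eqT revT]] := uniform_price_low_revenue regular (ltnW d2) p0.
  by exists T; split; rewrite // (le_trans revT) // lerDl ltW.
- move=> p; split.
    exists (split_thresholds (L := L) (1 / 2) (2 ^+ d)).
    apply: (split_equilibrium bipartite regular half01 (pow2_ge1 d)) => i.
      by rewrite /p => ->.
    by rewrite /p => /negbTE ->; rewrite two_pow_half.
  have p1 i : i \notin L -> 1 <= p i by rewrite /p => /negbTE ->.
  move=> T eqT; have [inL outL] := split_equilibrium_unique bipartite p1 eqT.
  have inL' i : i \in L -> T i = Some (1 / 2) by move=> iL; rewrite inL // /p iL.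
  do !split => //; apply: half_revenue => // i iL.
  by rewrite /p iL inL'.
Qed.
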